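(* Let $T$ be any staircase transformation on $[0,1)$, let $f$ be a $2$-wise constant roof function whose two height values are rationally independent, and let $\phi_t$ be the suspension flow built under $f$ over $T$. Then $\phi_t$ is a rank-one flow.
   Context: Staircase construction: fix a cutting sequence $(r_n)$ and initial interval $J=[0,a)$ (column $C_0$, height $1$). Column $C_n$ is obtained from $C_{n-1}$ (stacked equal-length intervals, the levels) by cutting into $r_n$ equal-width subcolumns, placing $i-1$ spacer intervals of the same width (taken consecutively from $[a,\infty)$) on the $i$-th subcolumn, and stacking the $(i+1)$-th subcolumn on the $i$-th; $T$ maps each non-top level by translation onto the level above; $a$ is chosen so that $J$ plus all spacers has total length $1$. $[0,a)$ is the non-spacer part, $[a,1)$ the spacer part. A $2$-wise constant function: $f$ takes two rationally independent values $p>q>0$, with $f=p$ on the non-spacer part and $f=q$ on the spacer part. Suspension flow: $X=\{(x,y):0\le y<f(x)\}$ with normalized Lebesgue measure $\mu$; points move up at unit speed and a point reaching $(x,f(x))$ jumps to $(T(x),0)$. A measure-preserving flow $\phi_t$ on a probability space $(X,\mathcal B,\mu)$ is rank-one if there exist measurable sets $A_n$, a decreasing sequence of times $t_n$ and an increasing sequence of integers $h_n$ such that: (1) $t_n\to0$; (2) $h_nt_n\to\infty$; (3) $\mu(\phi_{k_1t_n}A_n\cap\phi_{k_2t_n}A_n)=0$ for all distinct $k_1,k_2\in\{0,\dots,h_n-1\}$; (4) $\mu\big(X\setminus\bigcup_{k=0}^{h_n-1}\phi_{kt_n}(A_n)\big)\to0$ as $n\to\infty$. *)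

From HB Require Import structures.
From mathcomp Require Import all_boot all_order all_algebra.
From mathcomp Require Import all_classical all_reals all_analysis.
Set Implicit Arguments. Unset Strict Implicit. Unset Printing Implicit Defensive.
Import Order.TTheory GRing.Theory Num.Theory.
Import numFieldNormedType.Exports.
Local Open Scope classical_set_scope.
Local Open Scope ring_scope.

Section Staircase.
Variable R : realType.

(* Cutting sequence: [r k] is the number of subcolumns used to build
   column C_{k+1} from column C_k (i.e. r_{k+1} in the paper's notation). *)
Variables (r : nat -> nat) (a : R).

Definition st_width (n : nat) : R := a / (\prod_(k < n) (r k)%:R).

(* left end of the first spacer used when building C_{n+1} from C_n:
   spacers are taken consecutively from [a, oo); step k+1 uses
   'C(r k, 2) = 0 + 1 + ... + (r k - 1) spacers of width st_width k.+1 *)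
Definition st_spacer_start (n : nat) : R :=
  a + \sum_(k < n) st_width k.+1 * ('C(r k, 2))%:R.

(* Column C_n, as the list (bottom to top) of the left endpoints of its levels;
   every level of C_n is [l, l + st_width n). *)
Fixpoint st_column (n : nat) : seq R :=
  match n with
  | 0 => [:: 0]
  | n'.+1 =>
    let L := st_column n' in
    let w := st_width n'.+1 in
    let s := st_spacer_start n' in
    flatten [seq [seq x + i%:R * w | x <- L] ++
                 [seq s + ('C(i, 2) + j)%:R * w | j <- iota 0 i]
            | i <- iota 0 (r n')]
  end.

(* a is chosen so that J = [0,a) plus all spacers has total length 1 *)
Definition st_total_length_one : Prop :=
  (fun N => st_spacer_start N) @ \oo --> (1 : R).

Definition is_staircase_map (T : R -> R) : Prop :=
  forall n j, (j.+1 < size (st_column n))%N ->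
  forall x, nth 0 (st_column n) j <= x < nth 0 (st_column n) j + st_width n ->
    T x = x - nth 0 (st_column n) j + nth 0 (st_column n) j.+1.

End Staircase.

Definition staircase (R : realType) (r : nat -> nat) (a : R) (T : R -> R) : Prop :=
  (forall n, (2 <= r n)%N) /\ st_total_length_one r a /\ is_staircase_map r a T.

(* the 2-wise constant roof: p on the non-spacer part [0,a), q on the spacer part *)
Definition roof2 (R : realType) (a p q : R) (x : R) : R := if x < a then p else q.

Definition rationally_independent (R : realType) (p q : R) : Prop :=
  forall m n : int, m%:~R * p + n%:~R * q = 0 -> m = 0 /\ n = 0.

Definition susp_space (R : realType) (f : R -> R) : set (R * R) :=
  [set z | (0 <= z.1 < 1) /\ (0 <= z.2 < f z.1)].

(* phi_t z = z' for t >= 0 : move up at unit speed, jumping from (x, f x) to (T x, 0) *)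
Definition susp_flow_rel (R : realType) (T : R -> R) (f : R -> R) (t : R)
    (z z' : R * R) : Prop :=
  exists m : nat,
    z'.1 = iter m T z.1 /\
    z'.2 = z.2 + t - \sum_(i < m) f (iter i T z.1) /\
    0 <= z'.2 < f z'.1.

Definition susp_flow_img (R : realType) (T : R -> R) (f : R -> R) (t : R)
    (A : set (R * R)) : set (R * R) :=
  [set z' | exists2 z, A z & susp_flow_rel T f t z z'].

Local Open Scope ereal_scope.
Definition susp_measure (R : realType) (f : R -> R) (B : set (R * R)) : \bar R :=
  ((@lebesgue_measure R \x @lebesgue_measure R) (B `&` susp_space f)) *
  ((fine ((@lebesgue_measure R \x @lebesgue_measure R) (susp_space f)))^-1)%:E.
Local Close Scope ereal_scope.

Definition rank_one_susp_flow (R : realType) (T : R -> R) (f : R -> R) : Prop :=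
  let X := susp_space f in
  let phi := susp_flow_img T f in
  let mu := susp_measure f in
  exists (A : nat -> set (R * R)) (t : nat -> R) (h : nat -> nat),
    (forall n, measurable (A n) /\ A n `<=` X) /\
    (forall n, 0 < t n) /\ (forall n, t n.+1 < t n) /\
    (forall n, (h n < h n.+1)%N) /\
    (forall n k, (k < h n)%N -> measurable (phi (k%:R * t n) (A n))) /\
    t @ \oo --> 0 /\
    (fun n => (h n)%:R * t n) @ \oo --> +oo /\
    (forall n k1 k2, (k1 < h n)%N -> (k2 < h n)%N -> k1 <> k2 ->
       mu (phi (k1%:R * t n) (A n) `&` phi (k2%:R * t n) (A n)) = 0%E) /\
    (fun n => mu (X `\` \bigcup_(k in `I_(h n)) phi (k%:R * t n) (A n)))
      @ \oo --> 0%E.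

From HB Require Import structures.
From mathcomp Require Import all_boot all_order all_algebra.
From mathcomp Require Import all_classical all_reals all_analysis.
From mathcomp Require Import zify ring lra.
Import Order.TTheory GRing.Theory Num.Theory.
Import numFieldNormedType.Exports.
Local Open Scope ring_scope.
Set Implicit Arguments. Unset Strict Implicit. Unset Printing Implicit Defensive.

(* The column C_n of the staircase is a Rokhlin tower for T whose levels tile
   [0, s_n), and s_n -> 1.  Over it the suspension is a tower of height H_n,
   the sum of the roof values over the levels.  With A_n the base level times
   [0, t_n) and t_n = H_n / h_n, the flow for time k t_n carries A_n onto the
   points whose flow time since leaving the base lies in [k t_n, (k+1) t_n);
   these h_n slices are disjoint and fill the tower, which misses a set of
   measure at most (1 - s_n) p.  Taking h_n = |C_n| B^(n+1) with p < B q makes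
   t_n decrease to 0 while h_n t_n = H_n >= |C_n| q grows without bound. *)

Section Binomial.
Local Open Scope nat_scope.

Lemma sumn_iota_addn m k : sumn [seq m + i | i <- iota 0 k] = m * k + 'C(k, 2).
Proof.
have -> : iota 0 k = index_iota 0 k by rewrite /index_iota subn0.
rewrite sumnE big_map big_split /=.
by rewrite sum_nat_const_nat bin2_sum subn0 mulnC.
Qed.

Lemma bin2_decomp k c : c < 'C(k, 2) -> exists i j, [/\ i < k, j < i & c = 'C(i, 2) + j].
Proof.
elim: k => [|k IH]; first by rewrite bin0n.
rewrite binS bin1 => hc.
case: (ltnP c 'C(k, 2)) => h.
  by have [i [j [h1 h2 h3]]] := IH h; exists i, j; split => //; lia.
by exists k, (c - 'C(k, 2)); split => //; lia.
Qed.

End Binomial.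

Section LevelIndex.
Local Open Scope nat_scope.
Variable r : nat -> nat.

(* The levels of C_n, bottom to top, as multiples of the width of C_n
   (see [st_columnE]). *)
Fixpoint level_index (n : nat) : seq nat :=
  match n with
  | 0 => [:: 0]
  | n'.+1 =>
    let L := level_index n' in
    flatten [seq [seq m * r n' + i | m <- L] ++
                 [seq size L * r n' + ('C(i, 2) + j) | j <- iota 0 i]
            | i <- iota 0 (r n')]
  end.

Lemma size_level_indexS n :
  size (level_index n.+1) = size (level_index n) * r n + 'C(r n, 2).
Proof.
rewrite /= size_flatten /shape -map_comp -sumn_iota_addn; congr sumn.
by apply: eq_map => i /=; rewrite size_cat !size_map size_iota.
Qed.

Lemma level_index_cover n x : x < size (level_index n) -> x \in level_index n.
Proof.
elim: n x => [|n IH] x; first by case: x.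
rewrite size_level_indexS => hx.
set L := level_index n; set N := size L; set rn := r n.
have {}hx : x < N * rn + 'C(rn, 2) := hx.
pose subcol i := [seq m * rn + i | m <- L] ++
                 [seq N * rn + ('C(i, 2) + j) | j <- iota 0 i].
have subcol_in i : i < rn -> subcol i \in [seq subcol i | i <- iota 0 rn].
  by move=> hi; apply: map_f; rewrite mem_iota.
apply/flattenP; case: (ltnP x (N * rn)) => h.
  have rn_gt0 : 0 < rn by rewrite lt0n; apply: contraTneq h => ->; rewrite muln0.
  exists (subcol (x %% rn)); first by rewrite subcol_in // ltn_pmod.
  rewrite mem_cat {1}(divn_eq x rn); apply/orP; left.
  rewrite (map_f (fun m => m * rn + x %% rn)) //.
  by apply: IH; rewrite ltn_divLR.
have [i [j [hi hj hxij]]] : exists i j, [/\ i < rn, j < i & x - N * rn = 'C(i, 2) + j].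
  by apply: bin2_decomp; lia.
exists (subcol i); first exact: subcol_in.
rewrite mem_cat; apply/orP; right.
have -> : x = N * rn + ('C(i, 2) + j) by lia.
by rewrite (map_f (fun j => N * rn + ('C(i, 2) + j))) // mem_iota.
Qed.

Lemma level_index_uniq n : uniq (level_index n).
Proof.
apply: (@leq_size_uniq _ (iota 0 (size (level_index n)))); rewrite ?iota_uniq //.
  by move=> x; rewrite mem_iota => /andP[_]; apply: level_index_cover.
by rewrite size_iota.
Qed.

Lemma mem_level_index n x : (x \in level_index n) = (x < size (level_index n)).
Proof.
have sub : {subset iota 0 (size (level_index n)) <= level_index n}.
  by move=> y; rewrite mem_iota => /andP[_]; apply: level_index_cover.
have [_ eq_iota] := uniq_min_size (iota_uniq _ _) sub (eq_leq (esym (size_iota _ _))).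
by rewrite -eq_iota mem_iota.
Qed.

Hypothesis r_ge2 : forall n, 2 <= r n.

Lemma size_level_index_gt n : n < size (level_index n).
Proof.
elim: n => [//|n IH]; rewrite size_level_indexS.
have : size (level_index n) * 2 <= size (level_index n) * r n by rewrite leq_mul2l r_ge2 orbT.
lia.
Qed.

Lemma size_level_index_gt0 n : 0 < size (level_index n).
Proof. exact: leq_ltn_trans (leq0n n) (size_level_index_gt n). Qed.

Lemma size_level_index_leS n : size (level_index n) <= size (level_index n.+1).
Proof.
by rewrite size_level_indexS (leq_trans (leq_pmulr _ (ltnW (r_ge2 n)))) ?leq_addr.
Qed.

End LevelIndex.

Section Slots.
Variable R : archiRealFieldType.
Implicit Types (t u : R) (k m : nat).

Lemma slot_uniq t u k1 k2 : 0 < t ->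
  k1%:R * t <= u < k1%:R * t + t -> k2%:R * t <= u < k2%:R * t + t -> k1 = k2.
Proof.
move=> t_gt0 /andP[u1 u2] /andP[v1 v2].
have slot_lt k k' : (k < k')%N -> k%:R * t + t <= k'%:R * t.
  by move=> ?; rewrite -{2}[t]mul1r -mulrDl natr1 ler_pM2r // ler_nat.
by case: (ltngtP k1 k2) => // /slot_lt ?; exfalso; lra.
Qed.

Lemma slot_exists t u : 0 < t -> 0 <= u -> exists k, k%:R * t <= u < k%:R * t + t.
Proof.
move=> t_gt0 u_ge0; exists (Num.truncn (u / t)).
have /andP[lo hi] := truncn_itv (divr_ge0 u_ge0 (ltW t_gt0)).
rewrite ler_pdivlMr // in lo; rewrite ltr_pdivrMr // -natr1 mulrDl mul1r in hi.
by rewrite lo hi.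
Qed.

Lemma slot_ltn t u k m : 0 < t -> k%:R * t <= u -> u < m%:R * t -> (k < m)%N.
Proof. by move=> t_gt0 ku um; rewrite -(ltr_nat R) -(ltr_pM2r t_gt0); lra. Qed.

End Slots.

Section StaircaseColumns.
Variable R : realType.
Variables (r : nat -> nat) (a : R).
Hypothesis r_gt0 : forall n, (0 < r n)%N.

Local Notation w := (st_width r a).
Local Notation s := (st_spacer_start r a).

Definition st_cuts (n : nat) : nat := \prod_(k < n) r k.

Lemma st_cuts_gt0 n : (0 < st_cuts n)%N.
Proof. by rewrite prodn_gt0. Qed.

Lemma st_widthE n : w n = a / (st_cuts n)%:R.
Proof. by rewrite /st_width /st_cuts natr_prod. Qed.

Lemma st_cuts_width n : (st_cuts n)%:R * w n = a.
Proof. by rewrite st_widthE mulrC divfK // pnatr_eq0 -lt0n st_cuts_gt0. Qed.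

Lemma st_widthS n : w n = (r n)%:R * w n.+1.
Proof.
have cuts_neq0 : (st_cuts n)%:R != 0 :> R by rewrite pnatr_eq0 -lt0n st_cuts_gt0.
have rn_neq0 : (r n)%:R != 0 :> R by rewrite pnatr_eq0 -lt0n r_gt0.
rewrite !st_widthE {2}/st_cuts big_ord_recr /= natrM -/(st_cuts n); field.
by rewrite cuts_neq0 rn_neq0.
Qed.

Lemma st_spacer_startS n : s n.+1 = s n + w n.+1 * ('C(r n, 2))%:R.
Proof. by rewrite /st_spacer_start big_ord_recr /= addrA. Qed.

Lemma st_spacer_startE n : s n = (size (level_index r n))%:R * w n.
Proof.
elim: n => [|n IH].
  by rewrite /st_spacer_start big_ord0 addr0 mul1r st_widthE /st_cuts big_ord0 divr1.
by rewrite st_spacer_startS IH size_level_indexS st_widthS natrD natrM; ring.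
Qed.

Lemma st_columnE n : st_column r a n = [seq m%:R * w n | m <- level_index r n].
Proof.
elim: n => [|n IH]; first by rewrite /= mul0r.
rewrite /= IH map_flatten -map_comp; congr flatten; apply: eq_map => i /=.
rewrite map_cat -!map_comp; congr (_ ++ _); apply: eq_map => m /=.
  by rewrite st_widthS natrD natrM; ring.
by rewrite st_spacer_startE st_widthS !natrD !natrM; ring.
Qed.

End StaircaseColumns.

Section SuspensionMeasure.
Local Open Scope classical_set_scope.
Variable R : realType.

Local Notation lebesgue2 := (@lebesgue_measure R \x @lebesgue_measure R)%E.

Lemma lebesgue2_rectangle (x1 x2 y1 y2 : R) : x1 <= x2 -> y1 <= y2 ->
  lebesgue2 (`[x1, x2[%classic `*` `[y1, y2[%classic) = ((x2 - x1) * (y2 - y1))%:E.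
Proof.
have itv_len (u v : R) : u <= v -> lebesgue_measure `[u, v[%classic = (v - u)%:E.
  move=> le_uv; rewrite lebesgue_measure_itv /= lte_fin.
  case: ltrP => [_|le_vu]; first by rewrite -EFinD.
  by rewrite (@le_anti _ _ v u) ?le_vu ?le_uv // subrr.
move=> le_x le_y; rewrite product_measure1E ?EFinM; try exact: measurable_itv.
by congr (_ * _)%E; exact: itv_len.
Qed.

Lemma susp_space_roof2_measurable (a p q : R) : measurable (susp_space (roof2 a p q)).
Proof.
have -> : susp_space (roof2 a p q) =
    ((`[0, 1[%classic `&` `]-oo, a[%classic) `*` `[0, p[%classic) `|`
    ((`[0, 1[%classic `&` `[a, +oo[%classic) `*` `[0, q[%classic).
  apply/seteqP; split => -[x y]; rewrite /susp_space /roof2 /= !in_itv /= andbT.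
    move=> [x01]; case: ifP => [_ y_in | /negbT x_ge y_in].
      by left.
    by right; rewrite [a <= _]leNgt x_ge.
  by case=> -[[x01 x_a] y_in]; split => //; [rewrite x_a | rewrite [x < a]ltNge x_a].
apply: measurableU; apply: measurableX; try apply: measurableI; exact: measurable_itv.
Qed.

Lemma susp_measure_ge0 (f : R -> R) (B : set (R * R)) : (0 <= susp_measure f B)%E.
Proof. by rewrite mule_ge0 // lee_fin invr_ge0 fine_ge0. Qed.

End SuspensionMeasure.

Section StaircaseTower.
Local Open Scope classical_set_scope.
Variable R : realType.
Variables (r : nat -> nat) (a : R) (T : R -> R).
Hypotheses (r_ge2 : forall n, (2 <= r n)%N) (total_one : st_total_length_one r a)
  (T_staircase : is_staircase_map r a T).

Let r_gt0 n : (0 < r n)%N. Proof. exact: leq_trans (r_ge2 n). Qed.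

Local Notation w := (st_width r a).
Local Notation s := (st_spacer_start r a).
Local Notation N n := (size (level_index r n)).
Local Notation c n j := (nth 0%N (level_index r n) j).
Local Notation l n j := (nth 0 (st_column r a n) j).

Lemma st_a_gt0 : 0 < a.
Proof.
have [M _ /(_ M (leqnn M))] := cvgr_gt (1 : R) total_one (0 : R) ltr01.
rewrite /= st_spacer_startE // st_widthE; apply: contraTT; rewrite -!leNgt => a_le0.
by rewrite mulr_ge0_le0 // mulr_le0_ge0 // invr_ge0 ler0n.
Qed.

Lemma st_width_gt0 n : 0 < w n.
Proof. by rewrite st_widthE // divr_gt0 ?st_a_gt0 // ltr0n st_cuts_gt0. Qed.

Lemma st_spacer_start_le1 n : s n <= 1.
Proof.
have s_nondecr : {homo s : n m / (n <= m)%N >-> n <= m}.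
  apply/nondecreasing_seqP => m; rewrite st_spacer_startS.
  by rewrite lerDl mulr_ge0 // ltW // st_width_gt0.
have := nondecreasing_cvgn_le s_nondecr (cvgP _ total_one) n.
by rewrite (cvg_lim _ total_one).
Qed.

Lemma st_levelE n j : l n j = (c n j)%:R * w n.
Proof.
rewrite st_columnE //; case: (ltnP j (N n)) => h; first by rewrite (nth_map 0%N).
by rewrite !nth_default ?size_map // mul0r.
Qed.

Lemma size_st_column n : size (st_column r a n) = N n.
Proof. by rewrite st_columnE // size_map. Qed.

Lemma st_level_uniq n j1 j2 (x : R) : (j1 < N n)%N -> (j2 < N n)%N ->
  l n j1 <= x < l n j1 + w n -> l n j2 <= x < l n j2 + w n -> j1 = j2.
Proof.
rewrite !st_levelE => j1_lt j2_lt x_in1 x_in2.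
have c_eq := slot_uniq (st_width_gt0 n) x_in1 x_in2.
by apply/eqP; rewrite -(nth_uniq 0%N j1_lt j2_lt (level_index_uniq r n)) c_eq.
Qed.

Lemma st_level_cover n (x : R) : 0 <= x < s n ->
  exists2 j, (j < N n)%N & l n j <= x < l n j + w n.
Proof.
move=> /andP[x_ge0 x_lt]; have [m m_slot] := slot_exists (st_width_gt0 n) x_ge0.
have m_in : m \in level_index r n.
  have /andP[m_lo _] := m_slot.
  by rewrite mem_level_index (slot_ltn (st_width_gt0 n) m_lo) // -st_spacer_startE.
by exists (index m (level_index r n)); rewrite ?index_mem // st_levelE nth_index.
Qed.

Lemma st_base_level_sub n : 0 <= l n 0 /\ l n 0 + w n <= 1.
Proof.
have w_gt0 := st_width_gt0 n.
rewrite st_levelE; split; first by rewrite mulr_ge0 // ltW.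
have c_lt : (c n 0 < N n)%N.
  by rewrite -mem_level_index mem_nth // size_level_index_gt0.
have : ((c n 0)%:R + 1) * w n <= (N n)%:R * w n by rewrite ler_pM2r // natr1 ler_nat.
have := st_spacer_start_le1 n; rewrite st_spacer_startE //; lra.
Qed.

Lemma iter_st_map n (x : R) i : l n 0 <= x < l n 0 + w n -> (i < N n)%N ->
  iter i T x = x - l n 0 + l n i.
Proof.
move=> x_base; elim: i => [|i IH] i_lt; first by rewrite /=; ring.
have i_col : (i.+1 < size (st_column r a n))%N by rewrite size_st_column.
rewrite iterS IH 1?ltnW // (T_staircase i_col); first ring.
by case/andP: x_base => ? ?; apply/andP; split; lra.
Qed.

Lemma roof2_level n j (p q y : R) : l n j <= y < l n j + w n ->
  roof2 a p q y = roof2 a p q (l n j).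
Proof.
rewrite st_levelE /roof2 => /andP[y_ge y_lt].
(* [a] is a whole multiple of [w n], so no level straddles [a]. *)
have w_gt0 := st_width_gt0 n; have a_eq := st_cuts_width a r_gt0 n.
case: (ltnP (c n j) (st_cuts r n)) => c_cuts.
  have : ((c n j)%:R + 1) * w n <= (st_cuts r n)%:R * w n by rewrite ler_pM2r // natr1 ler_nat.
  by move=> ?; rewrite !ifT //; nra.
have : (st_cuts r n)%:R * w n <= (c n j)%:R * w n by rewrite ler_pM2r // ler_nat.
by move=> ?; rewrite !ifF //; apply/negbTE; rewrite -leNgt; nra.
Qed.

Variables (p q : R).
Hypotheses (q_gt0 : 0 < q) (q_lt_p : q < p).

Local Notation f := (roof2 a p q).

Lemma roof2_ge (y : R) : q <= f y.
Proof. by rewrite /roof2; case: ifP => _ //; rewrite ltW. Qed.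

Lemma roof2_le (y : R) : f y <= p.
Proof. by rewrite /roof2; case: ifP => _ //; rewrite ltW. Qed.

Lemma roof2_ge0 (y : R) : 0 <= f y.
Proof. exact: le_trans (ltW q_gt0) (roof2_ge y). Qed.

Definition height_below n j : R := \sum_(0 <= i < j) f (l n i).

Definition tower_height n : R := height_below n (N n).

Definition tower_base n (t : R) : set (R * R) :=
  [set z | l n 0 <= z.1 < l n 0 + w n /\ 0 <= z.2 < t].

(* A point (x, y) on level j of the tower over C_n has flown for time
   y + height_below n j since it left the base; slice k collects the points
   for which this time lies in [k t, (k + 1) t). *)
Definition tower_slice n (t : R) (k : nat) : set (R * R) :=
  [set z | exists2 j, (j < N n)%N & [/\ l n j <= z.1 < l n j + w n,
     0 <= z.2 < f (l n j) & k%:R * t <= z.2 + height_below n j < k%:R * t + t]].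

Lemma height_belowS n j : height_below n j.+1 = height_below n j + f (l n j).
Proof. by rewrite /height_below big_nat_recr. Qed.

Lemma height_below_ge0 n j : 0 <= height_below n j.
Proof. by apply: sumr_ge0 => i _; apply: roof2_ge0. Qed.

Lemma height_below_le n j m : (j <= m)%N -> height_below n j <= height_below n m.
Proof.
move=> le_jm; rewrite /height_below (big_cat_nat (leq0n j) le_jm) /= lerDl.
by apply: sumr_ge0 => i _; apply: roof2_ge0.
Qed.

Lemma tower_height_ge n : (N n)%:R * q <= tower_height n.
Proof.
rewrite /tower_height /height_below.
have -> : (N n)%:R * q = \sum_(0 <= i < N n) q by rewrite sumr_const_nat subn0 mulr_natl.
by apply: ler_sum => i _; apply: roof2_ge.
Qed.

Lemma tower_height_le n : tower_height n <= (N n)%:R * p.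
Proof.
rewrite /tower_height /height_below.
have -> : (N n)%:R * p = \sum_(0 <= i < N n) p by rewrite sumr_const_nat subn0 mulr_natl.
by apply: ler_sum => i _; apply: roof2_le.
Qed.

Lemma tower_height_gt0 n : 0 < tower_height n.
Proof.
apply: lt_le_trans (tower_height_ge n).
by rewrite mulr_gt0 // ltr0n size_level_index_gt0.
Qed.

Lemma sum_roof_iter n (x : R) m : l n 0 <= x < l n 0 + w n -> (m <= N n)%N ->
  \sum_(i < m) f (iter i T x) = height_below n m.
Proof.
move=> x_base le_mN.
rewrite -(big_mkord xpredT (fun i => f (iter i T x))) /height_below !big_nat.
apply: eq_bigr => i /andP[_ lt_im].
rewrite (iter_st_map x_base) 1?(leq_trans lt_im) //; apply: roof2_level.
by case/andP: x_base => ? ?; apply/andP; split; lra.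
Qed.

Lemma susp_flow_tower_base_sub n (t : R) k : k.+1%:R * t <= tower_height n ->
  susp_flow_img T f (k%:R * t) (tower_base n t) `<=` tower_slice n t k.
Proof.
rewrite -natr1 mulrDl mul1r => k_le.
move=> [x' y'] [[x y] [/= x_base /andP[y_ge0 y_lt]] [m [/= ->]]].
have [lt_mN|le_Nm] := ltnP m (N n); last first.
  have : tower_height n <= \sum_(i < m) f (iter i T x).
    rewrite -(big_mkord xpredT (fun i => f (iter i T x))).
    rewrite (big_cat_nat (leq0n (N n)) le_Nm) /= big_mkord.
    by rewrite (sum_roof_iter x_base) // lerDl sumr_ge0 // => i _; apply: roof2_ge0.
  by move=> ? [-> /andP[? ?]]; lra.
rewrite (sum_roof_iter x_base (ltnW lt_mN)) (iter_st_map x_base lt_mN) => -[-> y'_in].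
have x'_lev : l n m <= x - l n 0 + l n m < l n m + w n.
  by case/andP: x_base => ? ?; apply/andP; split; lra.
exists m => //; split => //; first by rewrite -(roof2_level _ _ x'_lev).
by rewrite /=; apply/andP; split; lra.
Qed.

Lemma tower_slice_sub_susp_flow n (t : R) k :
  tower_slice n t k `<=` susp_flow_img T f (k%:R * t) (tower_base n t).
Proof.
move=> [x' y'] [j lt_jN [/= x'_lev y'_in /andP[lo hi]]].
have x_base : l n 0 <= x' - l n j + l n 0 < l n 0 + w n.
  by case/andP: x'_lev => ? ?; apply/andP; split; lra.
exists (x' - l n j + l n 0, y' + height_below n j - k%:R * t).
  by split => //=; apply/andP; split; lra.
exists j => /=; rewrite (iter_st_map x_base lt_jN) (sum_roof_iter x_base (ltnW lt_jN)).
by rewrite (roof2_level _ _ x'_lev); split; [ring | split; first ring].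
Qed.

Lemma susp_flow_tower_base n (t : R) k : k.+1%:R * t <= tower_height n ->
  susp_flow_img T f (k%:R * t) (tower_base n t) = tower_slice n t k.
Proof.
move=> k_le; apply/seteqP; split;
  [exact: susp_flow_tower_base_sub | exact: tower_slice_sub_susp_flow].
Qed.

Lemma tower_slice_measurable n (t : R) k : measurable (tower_slice n t k).
Proof.
have -> : tower_slice n t k = \bigcup_(j in `I_(N n))
    (`[l n j, l n j + w n[%classic `*`
      (`[0, f (l n j)[%classic `&`
       `[k%:R * t - height_below n j, k%:R * t + t - height_below n j[%classic)).
  apply/seteqP; split => -[x y] [j lt_jN].
    move=> [/= x_lev y_in /andP[lo hi]]; exists j => //=; rewrite !in_itv /=.
    by split => //; split => //; apply/andP; split; lra.
  rewrite /= !in_itv /= => -[x_lev [y_in /andP[lo hi]]]; exists j => //.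
  by split => //=; apply/andP; split; lra.
apply: bigcup_measurable => j _; apply: measurableX; first exact: measurable_itv.
by apply: measurableI; exact: measurable_itv.
Qed.

Lemma tower_slices_disjoint n (t : R) k1 k2 : 0 < t -> k1 <> k2 ->
  tower_slice n t k1 `&` tower_slice n t k2 = set0.
Proof.
move=> t_gt0 neq_k; apply/seteqP; split => // -[x y].
move=> [[j1 lt_j1 [lev1 _ slot1]] [j2 lt_j2 [lev2 _ slot2]]].
move: slot2; rewrite -(st_level_uniq lt_j1 lt_j2 lev1 lev2) => slot2.
exact: neq_k (slot_uniq t_gt0 slot1 slot2).
Qed.

Lemma tower_slices_cover n (t : R) h (z : R * R) : 0 < t -> h%:R * t = tower_height n ->
  susp_space f z -> z.1 < s n -> exists2 k, (k < h)%N & tower_slice n t k z.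
Proof.
case: z => x y t_gt0 ht_eq [/= /andP[x_ge0 _] /andP[y_ge0 y_lt]] x_lt.
have [j lt_jN x_lev] := st_level_cover (x := x) (n := n) (ltac:(by apply/andP)).
rewrite (roof2_level _ _ x_lev) in y_lt.
have [k /andP[lo hi]] := slot_exists t_gt0 (addr_ge0 y_ge0 (height_below_ge0 n j)).
exists k; last by exists j => //; split => //; apply/andP.
apply: slot_ltn t_gt0 lo _; rewrite ht_eq.
by have := height_below_le n lt_jN; rewrite height_belowS /tower_height; lra.
Qed.

Lemma susp_uncovered_sub n (t : R) h : 0 < t -> h%:R * t = tower_height n ->
  susp_space f `\` \bigcup_(k in `I_h) tower_slice n t k `<=`
  `[s n, 1[%classic `*` `[0, p[%classic.
Proof.
move=> t_gt0 ht_eq [x y] [z_in not_covered]; rewrite /= !in_itv /=.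
have [/= /andP[_ x_lt1] /andP[y_ge0 y_lt]] := z_in.
rewrite x_lt1 y_ge0 (lt_le_trans y_lt (roof2_le x)) !andbT leNgt; split => //.
apply/negP => x_lt; apply: not_covered.
by have [k lt_kh slice_k] := tower_slices_cover t_gt0 ht_eq z_in x_lt; exists k.
Qed.

Local Notation lebesgue2 := (@lebesgue_measure R \x @lebesgue_measure R)%E.

Lemma susp_measure_uncovered n (t : R) h : 0 < t -> h%:R * t = tower_height n ->
  (susp_measure f (susp_space f `\`
     \bigcup_(k in `I_h) susp_flow_img T f (k%:R * t) (tower_base n t))
   <= ((1 - s n) * p * (fine (lebesgue2 (susp_space f)))^-1)%:E)%E.
Proof.
move=> t_gt0 ht_eq.
have slice_le k : (k < h)%N -> k.+1%:R * t <= tower_height n.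
  by move=> lt_kh; rewrite -ht_eq ler_pM2r // ler_nat.
rewrite (eq_bigcupr (fun k lt_kh => susp_flow_tower_base (slice_le k lt_kh))).
have X_meas := susp_space_roof2_measurable a p q.
rewrite /susp_measure EFinM lee_wpmul2r ?lee_fin ?invr_ge0 ?fine_ge0 //.
have rect := lebesgue2_rectangle (st_spacer_start_le1 n) (ltW (lt_trans q_gt0 q_lt_p)).
rewrite subr0 in rect; rewrite -rect.
apply: le_measure; rewrite ?inE.
- apply: measurableI => //; apply: measurableD => //.
  by apply: bigcup_measurable => k _; apply: tower_slice_measurable.
- by apply: measurableX; exact: measurable_itv.
- by apply: subset_trans (susp_uncovered_sub t_gt0 ht_eq); apply: subIsetl.
Qed.

Lemma tower_base_measurable n (t : R) : measurable (tower_base n t).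
Proof.
have -> : tower_base n t = `[l n 0, l n 0 + w n[%classic `*` `[0, t[%classic.
  by apply/seteqP; split => -[x y]; rewrite /tower_base /= !in_itv.
by apply: measurableX; exact: measurable_itv.
Qed.

Lemma tower_base_sub n (t : R) : t <= q -> tower_base n t `<=` susp_space f.
Proof.
move=> le_tq [x y] [/= /andP[x_ge x_lt] /andP[y_ge0 y_lt]].
have [base_ge0 base_le1] := st_base_level_sub n.
by have := roof2_ge x; split; apply/andP; split => //=; lra.
Qed.

Lemma tower_height_cvgy : tower_height @ \oo --> +oo.
Proof.
apply/cvgryPge => M; apply: filterS (nbhs_infty_ger (M / q)) => n.
rewrite ler_pdivrMr // => le_Mn; apply: le_trans (tower_height_ge n).
have : n%:R * q <= (N n)%:R * q by rewrite ler_pM2r // ler_nat ltnW // size_level_index_gt.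
lra.
Qed.

Section TowerSteps.
Variable B : nat.
Hypothesis p_lt_Bq : p < B%:R * q.

Let B_gt1 : (1 < B)%N.
Proof.
rewrite ltnNge; apply/negP => le_B1.
have : B%:R * q <= q by apply: ler_piMl; [exact: ltW | rewrite lern1].
by move=> /(lt_le_trans (lt_trans q_lt_p p_lt_Bq)); rewrite ltxx.
Qed.

Let B_exp_gt0 n : 0 < (B ^ n)%:R :> R.
Proof. by rewrite ltr0n expn_gt0 ltnW. Qed.

Definition tower_steps n : nat := N n * B ^ n.+1.

Definition tower_step n : R := tower_height n / (tower_steps n)%:R.

Lemma tower_steps_gt0 n : 0 < (tower_steps n)%:R :> R.
Proof. by rewrite natrM mulr_gt0 // ltr0n size_level_index_gt0. Qed.

Lemma tower_step_gt0 n : 0 < tower_step n.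
Proof. by rewrite divr_gt0 ?tower_height_gt0 ?tower_steps_gt0. Qed.

Lemma tower_steps_mul n : (tower_steps n)%:R * tower_step n = tower_height n.
Proof. by rewrite mulrC divfK // gt_eqF // tower_steps_gt0. Qed.

(* [tower_step n * B ^ n.+1] is the mean roof height over C_n, which lies in
   [q, p]; as p < B q, the steps decrease geometrically. *)
Lemma tower_step_scaled n : q <= tower_step n * (B ^ n.+1)%:R <= p.
Proof.
have N_gt0 : 0 < (N n)%:R :> R by rewrite ltr0n size_level_index_gt0.
have -> : tower_step n * (B ^ n.+1)%:R = tower_height n / (N n)%:R.
  rewrite /tower_step /tower_steps natrM; field.
  by rewrite !gt_eqF.
by rewrite ler_pdivlMr // ler_pdivrMr // ![_ * (N n)%:R]mulrC tower_height_ge tower_height_le.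
Qed.

Lemma tower_step_lt_q n : tower_step n < q.
Proof.
have /andP[_ le_p] := tower_step_scaled n.
have le_tB : tower_step n * B%:R <= tower_step n * (B ^ n.+1)%:R.
  by rewrite ler_pM2l ?tower_step_gt0 // ler_nat expnS leq_pmulr // expn_gt0 ltnW.
rewrite -(ltr_pM2r (B_exp_gt0 1)) expn1 [q * _]mulrC.
exact: le_lt_trans le_tB (le_lt_trans le_p p_lt_Bq).
Qed.

Lemma tower_step_decr n : tower_step n.+1 < tower_step n.
Proof.
have /andP[_ le_p] := tower_step_scaled n.+1; have /andP[ge_q _] := tower_step_scaled n.
rewrite -(ltr_pM2r (B_exp_gt0 n.+2)); apply: le_lt_trans le_p (lt_le_trans p_lt_Bq _).
by rewrite expnS natrM mulrCA ler_pM2l // (B_exp_gt0 1).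
Qed.

Lemma tower_step_cvg0 : tower_step @ \oo --> 0.
Proof.
apply: (@squeeze_cvgr _ _ _ _ (fun=> 0) (fun n => p * harmonic n)); last 2 first.
- exact: cvg_cst.
- by rewrite -(mulr0 p); apply: cvgM; [exact: cvg_cst | exact: cvg_harmonic].
apply: nearW => n; rewrite ltW ?tower_step_gt0 //= ler_pdivlMr //.
have /andP[_ le_p] := tower_step_scaled n; apply: le_trans le_p.
by rewrite ler_pM2l ?tower_step_gt0 // ler_nat ltnW // ltn_expl.
Qed.

Lemma tower_steps_incr n : (tower_steps n < tower_steps n.+1)%N.
Proof.
rewrite /tower_steps (expnS B n.+1) mulnA ltn_pmul2r ?expn_gt0 ?(ltnW B_gt1) //.
apply: (leq_ltn_trans (size_level_index_leS r_ge2 n)).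
by rewrite ltn_Pmulr // size_level_index_gt0.
Qed.

End TowerSteps.

Lemma susp_measure_uncovered_cvg0 (t : nat -> R) (h : nat -> nat) :
  (forall n, 0 < t n) -> (forall n, (h n)%:R * t n = tower_height n) ->
  (fun n => susp_measure f (susp_space f `\`
     \bigcup_(k in `I_(h n)) susp_flow_img T f (k%:R * t n) (tower_base n (t n))))
  @ \oo --> 0%E.
Proof.
move=> t_gt0 ht_eq; apply: (squeeze_cvge (f := fun=> 0%E)).
- apply: nearW => n; rewrite susp_measure_ge0.
  exact: susp_measure_uncovered (t_gt0 n) (ht_eq n).
- exact: cvg_cst.
apply: cvg_EFin; first exact: nearW.
have spacers_cvg1 : (fun n => 1 - s n) @ \oo --> (0 : R).
  by rewrite -(subrr 1); apply: cvgB => //; exact: cvg_cst.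
rewrite -(mul0r (fine (lebesgue2 (susp_space f)))^-1) -(mul0r p).
by apply: cvgM; [apply: cvgM|]; rewrite ?spacers_cvg1 //; exact: cvg_cst.
Qed.

Lemma staircase_susp_flow_rank_one : rank_one_susp_flow T f.
Proof.
have [B p_lt_Bq] : exists B : nat, p < B%:R * q.
  exists (Num.bound (p / q)); rewrite -ltr_pdivrMr //.
  by apply: archi_boundP; rewrite divr_ge0 // ltW // (lt_trans q_gt0).
have slice_le n k : (k < tower_steps B n)%N -> k.+1%:R * tower_step B n <= tower_height n.
  by move=> lt_kh; rewrite -(tower_steps_mul p_lt_Bq) ler_pM2r ?tower_step_gt0 // ler_nat.
exists (fun n => tower_base n (tower_step B n)), (tower_step B), (tower_steps B).
split=> [n|].
  by split; [exact: tower_base_measurable | apply/tower_base_sub/ltW/tower_step_lt_q].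
split; first exact: tower_step_gt0.
split; first exact: tower_step_decr.
split; first exact: tower_steps_incr.
split.
  by move=> n k /slice_le lt_k; rewrite susp_flow_tower_base //; exact: tower_slice_measurable.
split; first exact: tower_step_cvg0.
split; first by under eq_fun do rewrite tower_steps_mul //; exact: tower_height_cvgy.
split.
  move=> n k1 k2 /slice_le lt_k1 /slice_le lt_k2 neq_k.
  rewrite !susp_flow_tower_base // tower_slices_disjoint ?tower_step_gt0 //.
  by rewrite /susp_measure set0I measure0 mul0e.
apply: susp_measure_uncovered_cvg0 => n; [exact: tower_step_gt0 | exact: tower_steps_mul].
Qed.

End StaircaseTower.

Theorem lemma6p4 (R : realType) (r : nat -> nat) (a : R) (T : R -> R) (p q : R) :
  staircase r a T ->
  q > 0 -> p > q -> rationally_independent p q ->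
  rank_one_susp_flow T (roof2 a p q).
Proof.
(* The tower argument works for any roof values 0 < q < p. *)
move=> [r_ge2 [total_one T_staircase]] q_gt0 q_lt_p _.
exact: (staircase_susp_flow_rank_one r_ge2 total_one T_staircase q_gt0 q_lt_p).
Qed.
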